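(* Let $\mathfrak M$ be a relational structure with domain $\Sigma$. For every $n\ge1$ and every relation $R\subseteq(\Sigma^* )^n$, $R$ is $MSO(\mathfrak M)$-definable if and only if the relation $\mu(R)=\{(\mu(w_1),\dots,\mu(w_n)):(w_1,\dots,w_n)\in R\}$ admits a reduction sequence with respect to $\mathfrak M_\#$ and $\mathfrak S_{<\omega}$.
   Context: Let $\mathfrak L$ be a relational language and $\mathfrak M$ an $\mathfrak L$-structure with domain $\Sigma$. Let $\#\notin\Sigma$ and let $\mathfrak M_\#$ be the $\mathfrak L_\#=\mathfrak L\cup\{P_\#\}$-structure with domain $\Sigma\cup\{\#\}$, every symbol of $\mathfrak L$ interpreted as in $\mathfrak M$ and $P_\#(x)$ holding iff $x=\#$. $MSO(\mathfrak M)$-definability: for $w=(w_1,\dots,w_n)\in(\Sigma^* )^n$, $\langle w\rangle$ is the word over $(\Sigma\cup\{\#\})^n$ of length $\max_i|w_i|$ obtained by right-padding each $w_i$ with $\#$'s and reading them in parallel; $\pi_j(\langle w\rangle)$ is its $j$-th component and $u[i]$ the $i$-th letter of $u$ (from $0$). To each first-order $\mathfrak L_\#$-formula $F$ with at least one free variable associate a unary predicate $\alpha_F$; $MSO(\mathfrak L)$ is monadic second-order logic over $\{<\}\cup\{\alpha_F\}$. $R$ is $MSO(\mathfrak M)$-definable if there is an $MSO(\mathfrak L)$-sentence $\psi$ such that $w\in R$ iff $\psi$ holds in the structure with domain $D=\{0,\dots,|\langle w\rangle|-1\}$, natural order $<$, and, for each $F$ with $n$ free variables, $\alpha_F(x)$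 true iff $\mathfrak M_\#\models F(\pi_1(\langle w\rangle)[x],\dots,\pi_n(\langle w\rangle)[x])$. Weak power setting: let $W$ be the set of sequences $f:\omega\to\Sigma\cup\{\#\}$ with $f(i)\ne\#$ for only finitely many $i$. For $w\in\Sigma^*$, $\mu(w)\in W$ is the sequence $w\#^\omega$. $\mathfrak S_{<\omega}=(S^+(\omega);\subseteq,\ll)$ where $S^+(\omega)$ is the set of finite subsets of $\omega$, $\subseteq$ is inclusion, and $X\ll Y$ iff $X=\{m\}$, $Y=\{k\}$ with $m<k$. A relation $P\subseteq W^n$ admits a reduction sequence with respect to $\mathfrak M_\#$ and $\mathfrak S_{<\omega}$ if there are a first-order formula $G(X_1,\dots,X_l)$ in the language $\{\subseteq,\ll\}$ and first-order $\mathfrak L_\#$-formulas $\theta_1,\dots,\theta_l$ with $n$ free variables, such that $\mathfrak M_\#\models\neg\theta_i(\#,\dots,\#)$ for every $i$, and for every $(f_1,\dots,f_n)\in W^n$: $(f_1,\dots,f_n)\in P$ iff $\mathfrak S_{<\omega}\models G(T_1,\dots,T_l)$ where $T_i=\{x\in\omega:\mathfrak M_\#\models\theta_i(f_1(x),\dots,f_n(x))\}$. *)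

From Stdlib Require Import List Arith Lia.
Import ListNotations.
Set Implicit Arguments.

Definition scons {A : Type} (a : A) (e : nat -> A) : nat -> A :=
  fun i => match i with 0 => a | S k => e k end.

(* First-order formulas of L_# = L ∪ {P_#} (with equality),           *)
(* de Bruijn variables.  The domain of M_# is option Sigma,            *)
(* None playing the role of the new symbol #.                          *)
Section HashLogic.
Variable Sym : Type.
Variable ar : Sym -> nat.
Variable Sigma : Type.
Variable rel : Sym -> list Sigma -> Prop.

Inductive hform : Type :=
| HRel (s : Sym) (args : list nat)
| HHash (v : nat)
| HEq (u v : nat)
| HNot (f : hform)
| HAnd (f g : hform)
| HEx (f : hform).

(* 1 + largest free variable index (0 if none) *)
Fixpoint hfvb (f : hform) : nat :=
  match f with
  | HRel _ args => fold_right (fun v m => max (S v) m) 0 args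
  | HHash v => S v
  | HEq u v => max (S u) (S v)
  | HNot g => hfvb g
  | HAnd g h => max (hfvb g) (hfvb h)
  | HEx g => pred (hfvb g)
  end.

(* Satisfaction in M_#: symbols of L hold only on tuples of elements of
   Sigma (never on tuples involving #), as in M; P_#(x) iff x = #. *)
Fixpoint hsat (e : nat -> option Sigma) (f : hform) : Prop :=
  match f with
  | HRel s args => length args = ar s /\
      exists ws, map e args = map (@Some Sigma) ws /\ rel s ws
  | HHash v => e v = None
  | HEq u v => e u = e v
  | HNot g => ~ hsat e g
  | HAnd g h => hsat e g /\ hsat e h
  | HEx g => exists a, hsat (scons a e) g
  end.

(* Two separate de Bruijn sorts: position variables and set variables. *)
Inductive mso : Type :=
| MLt (x y : nat)
| MEq (x y : nat)
| MIn (x X : nat)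
| MAlpha (F : hform) (x : nat)
| MNot (f : mso)
| MAnd (f g : mso)
| MEx1 (f : mso)
| MEx2 (f : mso).

Fixpoint mfv1 (f : mso) : nat :=
  match f with
  | MLt x y | MEq x y => max (S x) (S y)
  | MIn x _ => S x
  | MAlpha _ x => S x
  | MNot g => mfv1 g
  | MAnd g h => max (mfv1 g) (mfv1 h)
  | MEx1 g => pred (mfv1 g)
  | MEx2 g => mfv1 g
  end.

Fixpoint mfv2 (f : mso) : nat :=
  match f with
  | MLt _ _ | MEq _ _ | MAlpha _ _ => 0
  | MIn _ X => S X
  | MNot g => mfv2 g
  | MAnd g h => max (mfv2 g) (mfv2 h)
  | MEx1 g => mfv2 g
  | MEx2 g => pred (mfv2 g)
  end.

Fixpoint mso_wf (n : nat) (f : mso) : Prop :=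
  match f with
  | MAlpha F _ => 0 < hfvb F <= n
  | MLt _ _ | MEq _ _ | MIn _ _ => True
  | MNot g => mso_wf n g
  | MAnd g h => mso_wf n g /\ mso_wf n h
  | MEx1 g | MEx2 g => mso_wf n g
  end.

Definition conv_len (w : list (list Sigma)) : nat :=
  fold_right (fun u m => max (length u) m) 0 w.

(* pi_{i+1}(<w>)[x] : the x-th letter of w_{i+1}, or # after its end *)
Definition conv_letter (w : list (list Sigma)) (i x : nat) : option Sigma :=
  match nth_error w i with
  | Some wi => nth_error wi x
  | None => None
  end.

Fixpoint msat (w : list (list Sigma)) (e1 : nat -> nat) (e2 : nat -> nat -> Prop)
  (f : mso) : Prop :=
  match f with
  | MLt x y => e1 x < e1 y
  | MEq x y => e1 x = e1 y
  | MIn x X => e2 X (e1 x)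
  | MAlpha F x => hsat (fun i => conv_letter w i (e1 x)) F
  | MNot g => ~ msat w e1 e2 g
  | MAnd g h => msat w e1 e2 g /\ msat w e1 e2 h
  | MEx1 g => exists p, p < conv_len w /\ msat w (scons p e1) e2 g
  | MEx2 g => exists X : nat -> Prop, (forall p, X p -> p < conv_len w) /\
                msat w e1 (scons X e2) g
  end.

Definition MSO_definable (n : nat) (R : list (list Sigma) -> Prop) : Prop :=
  exists psi : mso, mso_wf n psi /\ mfv1 psi = 0 /\ mfv2 psi = 0 /\
    forall w, length w = n ->
      (R w <-> msat w (fun _ => 0) (fun _ _ => False) psi).

Definition in_W (f : nat -> option Sigma) : Prop :=
  exists m, forall i, m <= i -> f i = None.

(* mu(w) = w #^omega *)
Definition mu (w : list Sigma) : nat -> option Sigma := fun i => nth_error w i.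

Definition mu_rel (R : list (list Sigma) -> Prop) : list (nat -> option Sigma) -> Prop :=
  fun fs => exists w, R w /\ fs = map mu w.

End HashLogic.

Inductive sform : Type :=
| SSub (a b : nat)
| SLL (a b : nat)
| SEq (a b : nat)
| SNot (f : sform)
| SAnd (f g : sform)
| SEx (f : sform).

Fixpoint sfvb (f : sform) : nat :=
  match f with
  | SSub a b | SLL a b | SEq a b => max (S a) (S b)
  | SNot g => sfvb g
  | SAnd g h => max (sfvb g) (sfvb h)
  | SEx g => pred (sfvb g)
  end.

(* Elements of S^+(omega): finite subsets of omega, represented as
   predicates (equality of elements is extensional equality). *)
Definition finite_set (X : nat -> Prop) : Prop := exists m, forall k, X k -> k < m.

Fixpoint ssat (e : nat -> nat -> Prop) (f : sform) : Prop :=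
  match f with
  | SSub a b => forall k, e a k -> e b k
  | SLL a b => exists m k, m < k /\ (forall j, e a j <-> j = m) /\
                                   (forall j, e b j <-> j = k)
  | SEq a b => forall k, e a k <-> e b k
  | SNot g => ~ ssat e g
  | SAnd g h => ssat e g /\ ssat e h
  | SEx g => exists X, finite_set X /\ ssat (scons X e) g
  end.

Section Reduction.
Variable Sym : Type.
Variable ar : Sym -> nat.
Variable Sigma : Type.
Variable rel : Sym -> list Sigma -> Prop.

Definition theta_set (thetas : list (hform Sym)) (fs : list (nat -> option Sigma))
  (i : nat) : nat -> Prop :=
  match nth_error thetas i with
  | Some th => fun x => hsat ar rel (fun j => nth j fs (fun _ => None) x) th
  | None => fun _ => False
  end.

Definition admits_reduction_sequence (n : nat)
  (P : list (nat -> option Sigma) -> Prop) : Prop :=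
  exists (G : sform) (thetas : list (hform Sym)),
    sfvb G <= length thetas /\
    Forall (fun th => hfvb th <= n /\ ~ hsat ar rel (fun _ => None) th) thetas /\
    forall fs : list (nat -> option Sigma),
      length fs = n -> Forall (@in_W Sigma) fs ->
      (P fs <-> ssat (theta_set thetas fs) G).
End Reduction.

(* From an MSO definition psi of R to a reduction sequence: position variables
   of psi become singleton sets and each predicate alpha_F becomes the set T
   defined by F; the sets defined by "x_i <> #" are required to be downward
   closed, which forces the sequences to be of the form mu(w), and then the
   translated formula holds exactly when psi holds on w.
   Conversely, every formula G over (S^+(omega); subset, <<) is recognised by a
   finite automaton reading the characteristic vectors of its free variables
   (the weak monadic theory of one successor is automatic, << being a local
   condition on two singletons); an MSO sentence can guess the run of this
   automaton on the sets T_i, one set variable per state, reading the letters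
   through the predicates alpha_theta_i. *)

From Stdlib Require Import List Arith Lia ClassicalEpsilon FunctionalExtensionality.
Import ListNotations.
Set Implicit Arguments.
Local Open Scope bool_scope.

Arguments MLt {Sym} x y.
Arguments MEq {Sym} x y.
Arguments MIn {Sym} x X.
Arguments HHash {Sym} v.
Arguments HEq {Sym} u v.

Definition truth (P : Prop) : bool :=
  if excluded_middle_informative P then true else false.

Lemma truthP (P : Prop) : Bool.reflect P (truth P).
Proof. unfold truth; destruct (excluded_middle_informative P); constructor; auto. Qed.

Lemma truth_true (P : Prop) : truth P = true <-> P.
Proof. symmetry; apply Bool.reflect_iff, truthP. Qed.

Lemma truth_false (P : Prop) : truth P = false <-> ~ P.
Proof. destruct (truthP P); intuition discriminate. Qed.

Fixpoint bool_vectors (n : nat) : list (list bool) :=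
  match n with
  | 0 => [[]]
  | S n => flat_map (fun l => [true :: l; false :: l]) (bool_vectors n)
  end.

Lemma bool_vectors_spec n l : In l (bool_vectors n) <-> length l = n.
Proof.
  revert l; induction n; intros l; simpl.
  - split; [intros [<-|[]]; auto|destruct l; simpl; try discriminate; auto].
  - rewrite in_flat_map; split.
    + intros [x [Hx Hl]]; apply IHn in Hx; simpl in Hl; destruct Hl as [<-|[<-|[]]]; simpl; auto.
    + intros H; destruct l as [|b l]; try discriminate.
      exists l; split; [apply IHn; simpl in H; lia|destruct b; simpl; auto].
Qed.

Lemma nth_map_seq {T} (g : nat -> T) N j d : j < N -> nth j (map g (seq 0 N)) d = g j.
Proof.
  intros Hj; rewrite nth_indep with (d' := g 0) by (rewrite length_map, length_seq; auto).
  rewrite map_nth, seq_nth; auto.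
Qed.

(** * Automata recognising the formulas over S_<omega *)

(* Automata reading, at each position p, the column of the characteristic
   vectors of a family of sets. *)
Definition letter := nat -> bool.
Definition blank : letter := fun _ => false.
Definition column (e : nat -> nat -> Prop) (p : nat) : letter := fun i => truth (e i p).

Record automaton := {
  state : Type;
  states : list state;
  start : state;
  step : state -> letter -> state;
  accepting : state -> Prop;
  start_in : In start states;
  step_in : forall q c, In q states -> In (step q c) states }.

Fixpoint run_from (A : automaton) (q : state A) (c : nat -> letter) (M : nat) : state A :=
  match M with 0 => q | S M' => step A (run_from A q c M') (c M') end.

Definition run (A : automaton) (c : nat -> letter) (M : nat) : state A :=
  run_from A (start A) c M.

Lemma run_in A c M : In (run A c M) (states A).
Proof. unfold run; induction M; simpl; auto using start_in, step_in. Qed.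

Lemma run_from_ext A q c c' M :
  (forall p, p < M -> c p = c' p) -> run_from A q c M = run_from A q c' M.
Proof.
  induction M; simpl; intros H; auto.
  rewrite IHM, (H M) by (try (intros; apply H); lia); auto.
Qed.

Lemma run_from_add A q c M K :
  run_from A q c (M + K) = run_from A (run_from A q c M) (fun p => c (M + p)) K.
Proof. induction K; simpl; [now rewrite Nat.add_0_r|]. now rewrite <- IHK, Nat.add_succ_r. Qed.

Definition recognizes (A : automaton) (g : sform) : Prop :=
  forall e M, (forall i p, e i p -> p < M) -> (ssat e g <-> accepting A (run A (column e) M)).

Definition letterwise (P : letter -> bool) : automaton.
Proof.
  refine {| state := bool; states := [true; false]; start := true;
            step := fun q c => q && P c; accepting := fun q => q = true |}.
  - simpl; auto.
  - intros [] c _; destruct (P c); simpl; auto.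
Defined.

Lemma letterwise_run P c M :
  run (letterwise P) c M = true <-> forall p, p < M -> P (c p) = true.
Proof.
  induction M; simpl.
  - split; intros; auto; lia.
  - unfold run in *; simpl; rewrite Bool.andb_true_iff, IHM.
    split.
    + intros [H HM] p Hp; destruct (Nat.eq_dec p M); subst; auto; apply H; lia.
    + intros H; split; auto.
Qed.

Lemma letterwise_recognizes (P : letter -> bool) (g : sform) (Q : (nat -> nat -> Prop) -> nat -> Prop) :
  (forall e, ssat e g <-> forall p, Q e p) ->
  (forall e p, P (column e p) = true <-> Q e p) ->
  (forall e p, (forall i, ~ e i p) -> Q e p) ->
  recognizes (letterwise P) g.
Proof.
  intros Hg HP Hblank e M HM; simpl; rewrite Hg, letterwise_run.
  split; intros H p; [intros _; apply HP, H|].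
  destruct (Nat.lt_ge_cases p M) as [Hp|Hp]; [apply HP, H; auto|].
  apply Hblank; intros i Hi; apply HM in Hi; lia.
Qed.

Lemma subset_recognizable a b : recognizes (letterwise (fun c => implb (c a) (c b))) (SSub a b).
Proof.
  apply letterwise_recognizes with (Q := fun e p => e a p -> e b p).
  - reflexivity.
  - intros e p; unfold column; destruct (truthP (e a p)), (truthP (e b p)); simpl; intuition discriminate.
  - intros e p H Ha; exfalso; eapply H; eauto.
Qed.

Lemma equal_recognizable a b : recognizes (letterwise (fun c => Bool.eqb (c a) (c b))) (SEq a b).
Proof.
  apply letterwise_recognizes with (Q := fun e p => e a p <-> e b p).
  - reflexivity.
  - intros e p; unfold column; destruct (truthP (e a p)), (truthP (e b p)); simpl; intuition discriminate.
  - intros e p H; split; intros X; exfalso; eapply H; eauto.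
Qed.

Section Precedes.
Variables (a b : nat) (e : nat -> nat -> Prop).

Definition prefix_empty (M : nat) : Prop := forall j, j < M -> ~ e a j /\ ~ e b j.
Definition prefix_left (M : nat) : Prop :=
  exists m, m < M /\ (forall j, j < M -> (e a j <-> j = m)) /\ (forall j, j < M -> ~ e b j).
Definition prefix_pair (M : nat) : Prop :=
  exists m k, m < k < M /\ (forall j, j < M -> (e a j <-> j = m)) /\
                          (forall j, j < M -> (e b j <-> j = k)).

Lemma prefix_empty_S M : prefix_empty (S M) <-> prefix_empty M /\ ~ e a M /\ ~ e b M.
Proof.
  split.
  - intros H; repeat split; try (intros; apply H; lia); apply (H M); lia.
  - intros [H [Ha Hb]] j Hj; destruct (Nat.eq_dec j M); subst; auto; apply H; lia.
Qed.

Lemma prefix_left_S M : prefix_left (S M) <->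
  (prefix_left M /\ ~ e a M /\ ~ e b M) \/ (prefix_empty M /\ e a M /\ ~ e b M).
Proof.
  split.
  - intros [m [Hm [Ha Hb]]].
    assert (HbM : ~ e b M) by (apply Hb; lia).
    destruct (Nat.eq_dec m M) as [->|Hne].
    + right; split; [|split; [apply Ha|]]; auto.
      intros j Hj; split; [intros X; apply Ha in X|apply Hb]; lia.
    + left; split; [|split; [intros X; apply Ha in X; lia|auto]].
      exists m; split; [lia|split]; intros j Hj; [apply Ha|apply Hb]; lia.
  - intros [[[m [Hm [Ha Hb]]] [HaM HbM]]|[H [HaM HbM]]].
    + exists m; split; [lia|split]; intros j Hj;
        destruct (Nat.eq_dec j M) as [->|]; try (apply Ha || apply Hb; lia); intuition lia.
    + exists M; split; [lia|split]; intros j Hj;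
        (destruct (Nat.eq_dec j M) as [->|Hne]; [tauto|]);
        (assert (Hj' : j < M) by lia); specialize (H j Hj'); intuition.
Qed.

Lemma prefix_pair_S M : prefix_pair (S M) <->
  (prefix_pair M /\ ~ e a M /\ ~ e b M) \/ (prefix_left M /\ ~ e a M /\ e b M).
Proof.
  split.
  - intros [m [k [Hmk [Ha Hb]]]].
    assert (HaM : ~ e a M) by (intros X; apply Ha in X; lia).
    destruct (Nat.eq_dec k M) as [->|Hne].
    + right; split; [|split; [auto|apply Hb; auto]].
      exists m; split; [lia|split]; intros j Hj; [apply Ha; lia|].
      intros X; apply Hb in X; lia.
    + left; split; [|split; [auto|intros X; apply Hb in X; lia]].
      exists m, k; split; [lia|split]; intros j Hj; [apply Ha|apply Hb]; lia.
  - intros [[[m [k [Hmk [Ha Hb]]]] [HaM HbM]]|[[m [Hm [Ha Hb]]] [HaM HbM]]].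
    + exists m, k; split; [lia|split]; intros j Hj;
        (destruct (Nat.eq_dec j M) as [->|Hne]; [split; intros; [tauto|exfalso; lia]|]);
        [apply Ha|apply Hb]; lia.
    + exists m, M; split; [lia|split]; intros j Hj.
      * destruct (Nat.eq_dec j M) as [->|Hne]; [split; intros; [tauto|exfalso; lia]|].
        apply Ha; lia.
      * destruct (Nat.eq_dec j M) as [->|Hne]; [tauto|].
        split; [intros X; exfalso; apply (Hb j)|]; lia || auto.
Qed.

Lemma prefix_empty_not_left M : prefix_empty M -> ~ prefix_left M.
Proof. intros H [m [Hm [Ha _]]]; apply (proj1 (H m Hm)), Ha; auto. Qed.

Lemma prefix_empty_not_pair M : prefix_empty M -> ~ prefix_pair M.
Proof. intros H [m [k [Hmk [Ha _]]]]; apply (proj1 (H m ltac:(lia))), Ha; lia. Qed.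

Lemma prefix_left_not_pair M : prefix_left M -> ~ prefix_pair M.
Proof. intros [m [Hm [_ Hb]]] [m' [k [Hmk [_ Hb']]]]; apply (Hb k); [lia|]; apply Hb'; lia. Qed.
End Precedes.

(* States: 0 = nothing read yet, 1 = the point of [a] read, 2 = then the point
   of [b] read, 3 = failure. *)
Definition precedes_step (a b : nat) (q : nat) (c : letter) : nat :=
  match q, c a, c b with
  | 0, false, false => 0
  | 0, true, false => 1
  | 1, false, false => 1
  | 1, false, true => 2
  | 2, false, false => 2
  | _, _, _ => 3
  end.

Definition precedes_automaton (a b : nat) : automaton.
Proof.
  refine {| state := nat; states := [0; 1; 2; 3]; start := 0;
            step := precedes_step a b; accepting := fun q => q = 2 |}.
  - simpl; auto.
  - intros q c _; unfold precedes_step; destruct q as [|[|[|q]]], (c a), (c b); simpl; auto 6.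
Defined.

Lemma precedes_run a b e M : let q := run (precedes_automaton a b) (column e) M in
  (q = 0 <-> prefix_empty a b e M) /\ (q = 1 <-> prefix_left a b e M) /\
  (q = 2 <-> prefix_pair a b e M).
Proof.
  induction M as [|M IH]; cbv zeta.
  - unfold prefix_empty, prefix_left, prefix_pair; cbn.
    repeat split; intros; try discriminate; try lia; firstorder lia.
  - rewrite prefix_empty_S, prefix_left_S, prefix_pair_S.
    change (run _ (column e) (S M)) with
      (precedes_step a b (run (precedes_automaton a b) (column e) M) (column e M)).
    pose proof (@prefix_empty_not_left a b e M); pose proof (@prefix_empty_not_pair a b e M).
    pose proof (@prefix_left_not_pair a b e M).
    destruct IH as [I0 [I1 I2]].
    destruct (run (precedes_automaton a b) (column e) M) as [|[|[|q]]];
      repeat match goal with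
      | I : (?x = ?x <-> _) |- _ => apply (fun h => proj1 h eq_refl) in I
      | I : (?x = ?y <-> ?P) |- _ => assert (~ P) by (rewrite <- I; discriminate); clear I
      end;
      unfold precedes_step, column; destruct (truthP (e a M)), (truthP (e b M));
      intuition discriminate.
Qed.

Lemma precedes_recognizable a b : recognizes (precedes_automaton a b) (SLL a b).
Proof.
  intros e M HM; destruct (precedes_run a b e M) as [_ [_ Hpair]]; cbv zeta in Hpair.
  change (ssat e (SLL a b) <-> run (precedes_automaton a b) (column e) M = 2).
  rewrite Hpair; split.
  - intros [m [k [Hmk [Ha Hb]]]]; exists m, k.
    assert (k < M) by (apply (HM b), Hb; auto).
    split; [lia|split]; intros; [apply Ha|apply Hb].
  - intros [m [k [Hmk [Ha Hb]]]]; exists m, k; split; [lia|split]; intros j.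
    + split; [intros X; apply Ha; eauto|intros ->; apply Ha; lia].
    + split; [intros X; apply Hb; eauto|intros ->; apply Hb; lia].
Qed.

Definition complement (A : automaton) : automaton :=
  {| state := state A; states := states A; start := start A; step := step A;
     accepting := fun q => ~ accepting A q; start_in := start_in A; step_in := step_in A |}.

Lemma complement_recognizes A g : recognizes A g -> recognizes (complement A) (SNot g).
Proof.
  intros H e M HM.
  assert (Hrun : forall c K, run (complement A) c K = run A c K).
  { intros c K; induction K; [reflexivity|]; unfold run in *; cbn [run_from]; now rewrite IHK. }
  simpl; rewrite Hrun, (H e M HM); reflexivity.
Qed.

Definition product (A B : automaton) : automaton.
Proof.
  refine {| state := (state A * state B)%type; states := list_prod (states A) (states B);
            start := (start A, start B); step := fun q c => (step A (fst q) c, step B (snd q) c);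
            accepting := fun q => accepting A (fst q) /\ accepting B (snd q) |}.
  - apply in_prod; apply start_in.
  - intros [x y] c Hq; apply in_prod_iff in Hq; apply in_prod; apply step_in; tauto.
Defined.

Lemma product_run A B c M : run (product A B) c M = (run A c M, run B c M).
Proof. induction M; [reflexivity|]; unfold run in *; cbn [run_from]; now rewrite IHM. Qed.

Lemma product_recognizes A B g h :
  recognizes A g -> recognizes B h -> recognizes (product A B) (SAnd g h).
Proof.
  intros HA HB e M HM; simpl; rewrite product_run; simpl.
  rewrite (HA e M HM), (HB e M HM); reflexivity.
Qed.

(* Subset construction for the projection along the set variable 0. A state is
   the characteristic vector, over the enumeration of [states A], of the states
   reachable for some guess of that variable. *)
Section Projection.
Variable A : automaton.
Let N := length (states A).
Let nth_state j := nth j (states A) (start A).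

Definition marks (V : list bool) (q : state A) : Prop :=
  exists j, j < N /\ nth j V false = true /\ nth_state j = q.

Definition projection_start : list bool := map (fun j => truth (nth_state j = start A)) (seq 0 N).

Definition projection_step (V : list bool) (c : letter) : list bool :=
  map (fun j => truth (exists i b, i < N /\ nth i V false = true /\
                          step A (nth_state i) (scons b c) = nth_state j)) (seq 0 N).

(* The guessed set may extend past the other sets, so the run of [A] may be
   continued over letters that are blank except on the guessed track. *)
Definition projection_accepting (V : list bool) : Prop :=
  exists q, marks V q /\ exists K (beta : nat -> bool),
    accepting A (run_from A q (fun p => scons (beta p) blank) K).

Definition projection : automaton.
Proof.
  refine {| state := list bool; states := bool_vectors N; start := projection_start;
            step := projection_step; accepting := projection_accepting |}.
  - apply bool_vectors_spec; unfold projection_start; rewrite length_map, length_seq; auto.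
  - intros q c _; apply bool_vectors_spec; unfold projection_step; rewrite length_map, length_seq; auto.
Defined.

Lemma marks_start q : marks projection_start q <-> q = start A.
Proof.
  unfold marks, projection_start; split.
  - intros [j [Hj [H1 H2]]]; rewrite nth_map_seq in H1 by auto; rewrite truth_true in H1; congruence.
  - intros ->; destruct (In_nth (states A) (start A) (start A) (start_in A)) as [j [Hj H]].
    exists j; repeat split; auto; rewrite nth_map_seq by auto; apply truth_true; auto.
Qed.

Lemma marks_step V c q' :
  marks (projection_step V c) q' <-> exists q b, marks V q /\ step A q (scons b c) = q'.
Proof.
  unfold marks, projection_step; split.
  - intros [j [Hj [H1 H2]]]; rewrite nth_map_seq in H1 by auto; rewrite truth_true in H1.
    destruct H1 as [i [b [Hi [H3 H4]]]]; exists (nth_state i), b; split; [exists i; auto|congruence].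
  - intros [q [b [[i [Hi [H1 H2]]] H3]]].
    assert (Hin : In q' (states A)) by (rewrite <- H3, <- H2; apply step_in, nth_In; auto).
    destruct (In_nth (states A) q' (start A) Hin) as [j [Hj H]].
    exists j; repeat split; auto; rewrite nth_map_seq by auto; apply truth_true.
    exists i, b; repeat split; auto; rewrite H2; unfold nth_state; congruence.
Qed.

Lemma projection_run c M q : marks (run projection c M) q <->
  exists beta : nat -> bool, run A (fun p => scons (beta p) (c p)) M = q.
Proof.
  revert q; induction M; intros q; unfold run in *; simpl.
  - rewrite marks_start; split; [intros ->; exists (fun _ => true); auto|intros [_ <-]; auto].
  - rewrite marks_step; split.
    + intros [q1 [b [H1 H2]]]; apply IHM in H1; destruct H1 as [beta Hb].
      exists (fun p => if Nat.eqb p M then b else beta p); simpl.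
      rewrite Nat.eqb_refl, <- H2, <- Hb; f_equal; apply run_from_ext.
      intros p Hp; destruct (Nat.eqb_spec p M); auto; lia.
    + intros [beta Hb]; exists (run_from A (start A) (fun p => scons (beta p) (c p)) M), (beta M).
      split; auto; apply IHM; exists beta; auto.
Qed.
End Projection.

Lemma column_scons X e p : column (scons X e) p = scons (truth (X p)) (column e p).
Proof. apply functional_extensionality; intros [|i]; reflexivity. Qed.

Lemma column_blank e p M : (forall i p, e i p -> p < M) -> M <= p -> column e p = blank.
Proof.
  intros HM Hp; apply functional_extensionality; intros i; unfold column, blank.
  apply truth_false; intros H; apply HM in H; lia.
Qed.

Lemma projection_recognizes A g : recognizes A g -> recognizes (projection A) (SEx g).
Proof.
  intros H e M HM; simpl; split.
  - intros [X [[M' HX] Hg]].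
    assert (HB : forall i p, scons X e i p -> p < M + M')
      by (intros [|i] p Hp; simpl in Hp; [apply HX in Hp|apply HM in Hp]; lia).
    apply (H _ _ HB) in Hg; unfold run in Hg; rewrite run_from_add in Hg.
    exists (run_from A (start A) (column (scons X e)) M); split.
    + apply projection_run; exists (fun p => truth (X p)); apply run_from_ext.
      intros; symmetry; apply column_scons.
    + exists M', (fun p => truth (X (M + p))); erewrite run_from_ext; [exact Hg|].
      intros p Hp; simpl; rewrite column_scons, (@column_blank e (M + p) M); auto; lia.
  - intros [q [Hq [K [beta' Hf]]]]; apply projection_run in Hq; destruct Hq as [beta Hb].
    set (X := fun p => (p < M /\ beta p = true) \/ (M <= p < M + K /\ beta' (p - M) = true)).
    exists X; split; [exists (M + K); intros p [[Hp _]|[Hp _]]; lia|].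
    assert (HB : forall i p, scons X e i p -> p < M + K).
    { intros [|i] p Hp; simpl in Hp; [destruct Hp as [[Hp _]|[Hp _]]|apply HM in Hp]; lia. }
    apply (H _ _ HB); unfold run; rewrite run_from_add.
    replace (run_from A (start A) (column (scons X e)) M) with q.
    + erewrite run_from_ext; [exact Hf|]; intros p Hp; simpl.
      rewrite column_scons, (@column_blank e (M + p) M) by (auto; lia); f_equal.
      unfold X; replace (M + p - M) with p by lia.
      destruct (beta' p) eqn:E; [apply truth_true|apply truth_false]; intuition (lia || congruence).
    + rewrite <- Hb; apply run_from_ext; intros p Hp; rewrite column_scons; f_equal.
      unfold X; destruct (beta p) eqn:E; symmetry; [apply truth_true|apply truth_false];
        intuition (lia || congruence).
Qed.

Fixpoint automaton_of (g : sform) : automaton :=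
  match g with
  | SSub a b => letterwise (fun c => implb (c a) (c b))
  | SLL a b => precedes_automaton a b
  | SEq a b => letterwise (fun c => Bool.eqb (c a) (c b))
  | SNot g => complement (automaton_of g)
  | SAnd g h => product (automaton_of g) (automaton_of h)
  | SEx g => projection (automaton_of g)
  end.

Lemma automaton_of_recognizes g : recognizes (automaton_of g) g.
Proof.
  induction g; simpl; auto using subset_recognizable, precedes_recognizable, equal_recognizable,
    complement_recognizes, product_recognizes, projection_recognizes.
Qed.

(** * MSO sentences describing runs of automata *)

Section MSOConnectives.
Variable Sym : Type.
Local Notation formula := (mso Sym).

Definition MFalse : formula := MEx1 (MNot (MEq 0 0)).
Definition MTrue : formula := MNot MFalse.
Definition MOr (f g : formula) : formula := MNot (MAnd (MNot f) (MNot g)).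
Definition MImp (f g : formula) : formula := MNot (MAnd f (MNot g)).
Definition MAll (f : formula) : formula := MNot (MEx1 (MNot f)).
Definition MConj (fs : list formula) : formula := fold_right (@MAnd Sym) MTrue fs.
Definition MDisj (fs : list formula) : formula := MNot (MConj (map (@MNot Sym) fs)).
Fixpoint MEx2s (N : nat) (f : formula) : formula :=
  match N with 0 => f | S N => MEx2 (MEx2s N f) end.

Variable ar : Sym -> nat.
Variable Sigma : Type.
Variable rel : Sym -> list Sigma -> Prop.
Variable w : list (list Sigma).
Local Notation sat := (msat ar rel w).
Local Notation L := (conv_len w).

Lemma MFalse_sem e1 e2 : ~ sat e1 e2 MFalse.
Proof. intros [p [_ H]]; apply H; reflexivity. Qed.

Lemma MTrue_sem e1 e2 : sat e1 e2 MTrue.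
Proof. apply MFalse_sem. Qed.

Lemma MOr_sem e1 e2 f g : sat e1 e2 (MOr f g) <-> sat e1 e2 f \/ sat e1 e2 g.
Proof. simpl; tauto. Qed.

Lemma MImp_sem e1 e2 f g : sat e1 e2 (MImp f g) <-> (sat e1 e2 f -> sat e1 e2 g).
Proof. simpl; tauto. Qed.

Lemma MAll_sem e1 e2 f : sat e1 e2 (MAll f) <-> forall p, p < L -> sat (scons p e1) e2 f.
Proof.
  simpl; split.
  - intros H p Hp; apply NNPP; intros H'; apply H; eauto.
  - intros H [p [Hp H']]; apply H', H; auto.
Qed.

Lemma MConj_sem e1 e2 fs : sat e1 e2 (MConj fs) <-> forall f, In f fs -> sat e1 e2 f.
Proof.
  induction fs as [|f fs IH]; simpl.
  - split; [tauto|intros _; exact (@MTrue_sem e1 e2)].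
  - rewrite IH; split; [intros [H1 H2] g [<-|Hg]; auto|intros H; split; auto].
Qed.

Lemma MConj_map_sem {A} e1 e2 (F : A -> formula) l :
  sat e1 e2 (MConj (map F l)) <-> forall a, In a l -> sat e1 e2 (F a).
Proof.
  rewrite MConj_sem; split; [intros H a Ha; apply H, in_map; auto|].
  intros H f Hf; apply in_map_iff in Hf; destruct Hf as [a [<- Ha]]; auto.
Qed.

Lemma MDisj_sem e1 e2 fs : sat e1 e2 (MDisj fs) <-> exists f, In f fs /\ sat e1 e2 f.
Proof.
  unfold MDisj; change (~ sat e1 e2 (MConj (map (@MNot Sym) fs)) <-> exists f, In f fs /\ sat e1 e2 f).
  rewrite MConj_sem; split.
  - intros H; apply NNPP; intros H'; apply H; intros f Hf; apply in_map_iff in Hf.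
    destruct Hf as [g [<- Hg]]; intros Hs; apply H'; eauto.
  - intros [f [Hf Hs]] H; apply (H (MNot f)); auto; apply in_map; auto.
Qed.

Definition push_sets (N : nat) (Xs e2 : nat -> nat -> Prop) : nat -> nat -> Prop :=
  fun j => if j <? N then Xs j else e2 (j - N).

Lemma push_sets_lt N Xs e2 j : j < N -> push_sets N Xs e2 j = Xs j.
Proof. intros H; unfold push_sets; destruct (Nat.ltb_spec j N); auto; lia. Qed.

Lemma push_sets_S N Xs e2 :
  push_sets (S N) Xs e2 = push_sets N Xs (scons (Xs N) e2).
Proof.
  apply functional_extensionality; intros j; unfold push_sets.
  destruct (Nat.ltb_spec j N), (Nat.ltb_spec j (S N)); try lia; auto.
  - replace j with N by lia; rewrite Nat.sub_diag; reflexivity.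
  - replace (j - N) with (S (j - S N)) by lia; reflexivity.
Qed.

Lemma MEx2s_sem N : forall e1 e2 f, sat e1 e2 (MEx2s N f) <->
  exists Xs, (forall j p, j < N -> Xs j p -> p < L) /\ sat e1 (push_sets N Xs e2) f.
Proof.
  induction N as [|N IH]; intros e1 e2 f; simpl.
  - assert (E : forall Xs, push_sets 0 Xs e2 = e2)
      by (intros; apply functional_extensionality; intros j; unfold push_sets; now rewrite Nat.sub_0_r).
    split; [intros H; exists e2|intros [Xs [_ H]]]; rewrite E in *; auto; split; [lia|auto].
  - split.
    + intros [X [HX H]]; apply IH in H; destruct H as [Xs [HXs H]].
      exists (fun j => if j <? N then Xs j else X); split.
      * intros j p Hj; destruct (Nat.ltb_spec j N); eauto.
      * rewrite push_sets_S, Nat.ltb_irrefl.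
        replace (push_sets N (fun j => if j <? N then Xs j else X) (scons X e2))
          with (push_sets N Xs (scons X e2)); auto.
        apply functional_extensionality; intros j; unfold push_sets.
        destruct (Nat.ltb_spec j N); auto.
    + intros [Xs [HXs H]]; rewrite push_sets_S in H; exists (Xs N); split; [intros p; apply HXs; lia|].
      apply IH; exists Xs; split; auto; intros j p Hj; apply HXs; lia.
Qed.
End MSOConnectives.

Arguments MFalse {Sym}. Arguments MTrue {Sym}. Arguments MOr {Sym} f g.
Arguments MImp {Sym} f g. Arguments MAll {Sym} f. Arguments MConj {Sym} fs.
Arguments MDisj {Sym} fs. Arguments MEx2s {Sym} N f.

Section Bounded.
Variables (Sym : Type) (n : nat).
Local Notation formula := (mso Sym).

Definition bounded (b1 b2 : nat) (f : formula) : Prop :=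
  mfv1 f <= b1 /\ mfv2 f <= b2 /\ mso_wf n f.

Lemma bounded_Lt b1 b2 x y : x < b1 -> y < b1 -> bounded b1 b2 (MLt x y).
Proof. unfold bounded; simpl; lia. Qed.
Lemma bounded_In b1 b2 x X : x < b1 -> X < b2 -> bounded b1 b2 (MIn x X).
Proof. unfold bounded; simpl; lia. Qed.
Lemma bounded_Alpha b1 b2 F x : x < b1 -> 0 < hfvb F <= n -> bounded b1 b2 (MAlpha F x).
Proof. unfold bounded; simpl; lia. Qed.
Lemma bounded_Not b1 b2 f : bounded b1 b2 f -> bounded b1 b2 (MNot f).
Proof. unfold bounded; simpl; tauto. Qed.
Lemma bounded_And b1 b2 f g : bounded b1 b2 f -> bounded b1 b2 g -> bounded b1 b2 (MAnd f g).
Proof. unfold bounded; simpl; intuition lia. Qed.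
Lemma bounded_Ex1 b1 b2 f : bounded (S b1) b2 f -> bounded b1 b2 (MEx1 f).
Proof. unfold bounded; simpl; intuition lia. Qed.
Lemma bounded_Ex2 b1 b2 f : bounded b1 (S b2) f -> bounded b1 b2 (MEx2 f).
Proof. unfold bounded; simpl; intuition lia. Qed.
Lemma bounded_False b1 b2 : bounded b1 b2 MFalse.
Proof. unfold bounded; simpl; lia. Qed.
Lemma bounded_True b1 b2 : bounded b1 b2 MTrue.
Proof. apply bounded_Not, bounded_False. Qed.
Lemma bounded_Or b1 b2 f g : bounded b1 b2 f -> bounded b1 b2 g -> bounded b1 b2 (MOr f g).
Proof. intros; unfold MOr; auto using bounded_Not, bounded_And. Qed.
Lemma bounded_Imp b1 b2 f g : bounded b1 b2 f -> bounded b1 b2 g -> bounded b1 b2 (MImp f g).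
Proof. intros; unfold MImp; auto using bounded_Not, bounded_And. Qed.
Lemma bounded_All b1 b2 f : bounded (S b1) b2 f -> bounded b1 b2 (MAll f).
Proof. intros; unfold MAll; auto using bounded_Not, bounded_Ex1. Qed.
Lemma bounded_Conj b1 b2 fs : (forall f, In f fs -> bounded b1 b2 f) -> bounded b1 b2 (MConj fs).
Proof. induction fs; simpl; intros H; [apply bounded_True|apply bounded_And; auto]. Qed.
Lemma bounded_Disj b1 b2 fs : (forall f, In f fs -> bounded b1 b2 f) -> bounded b1 b2 (MDisj fs).
Proof.
  intros H; apply bounded_Not, bounded_Conj; intros f Hf; apply in_map_iff in Hf.
  destruct Hf as [g [<- Hg]]; apply bounded_Not; auto.
Qed.
Lemma bounded_Ex2s b1 N b2 f : bounded b1 (N + b2) f -> bounded b1 b2 (MEx2s N f).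
Proof.
  revert b2; induction N; simpl; intros b2 H; auto.
  apply bounded_Ex2, IHN; now rewrite Nat.add_succ_r.
Qed.
End Bounded.
Arguments bounded {Sym} n b1 b2 f.

(* The MSO sentence guessing the run of an automaton [A] on the word of letters
   whose track [i] marks the positions satisfying the [i]-th formula of
   [thetas]: set variable [j] (for [j] below the number of states) holds the
   positions after which [A] is in its [j]-th state. *)
Section RunSentence.
Variables (Sym : Type) (ar : Sym -> nat) (Sigma : Type) (rel : Sym -> list Sigma -> Prop).
Variables (thetas : list (hform Sym)) (A : automaton).
Local Notation formula := (mso Sym).
Let k := length thetas.
Let Nq := length (states A).
Let nth_state j := nth j (states A) (start A).

Definition state_index (q : state A) : nat :=
  epsilon (inhabits 0) (fun j => j < Nq /\ nth_state j = q).

Lemma state_index_spec q : In q (states A) -> state_index q < Nq /\ nth_state (state_index q) = q.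
Proof.
  intros H; unfold state_index; apply epsilon_spec.
  destruct (In_nth _ _ (start A) H) as [j [Hj E]]; exists j; auto.
Qed.

(* The conjunct [x_0 = x_0] only ensures a free variable, as alpha_F requires. *)
Definition theta_at (i x : nat) : formula := MAlpha (HAnd (nth i thetas (HEq 0 0)) (HEq 0 0)) x.
Definition literal (i : nat) (b : bool) (x : nat) : formula :=
  if b then theta_at i x else MNot (theta_at i x).
Definition letter_is (v : list bool) (x : nat) : formula :=
  MConj (map (fun i => literal i (nth i v false) x) (seq 0 k)).
Definition vector_letter (v : list bool) : letter := fun i => nth i v false.

Definition is_first (x : nat) : formula := MNot (MEx1 (MLt 0 (S x))).
Definition is_last (x : nat) : formula := MNot (MEx1 (MLt (S x) 0)).
Definition is_succ (y x : nat) : formula :=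
  MAnd (MLt y x) (MNot (MEx1 (MAnd (MLt (S y) 0) (MLt 0 (S x))))).
Definition pred_in (j : nat) : formula := MEx1 (MAnd (is_succ 0 1) (MIn 0 j)).

Definition states_disjoint : formula :=
  MConj (map (fun i => MConj (map (fun j =>
    if i =? j then MTrue else MNot (MAnd (MIn 0 i) (MIn 0 j))) (seq 0 Nq))) (seq 0 Nq)).
Definition initial_step : formula :=
  MImp (is_first 0) (MConj (map (fun v =>
    MImp (letter_is v 0) (MIn 0 (state_index (step A (start A) (vector_letter v)))))
    (bool_vectors k))).
Definition transition_step : formula :=
  MConj (map (fun j => MConj (map (fun v =>
    MImp (MAnd (pred_in j) (letter_is v 0))
         (MIn 0 (state_index (step A (nth_state j) (vector_letter v))))) (bool_vectors k)))
    (seq 0 Nq)).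
Definition run_labelling : formula := MAll (MAnd states_disjoint (MAnd initial_step transition_step)).
Definition accepting_end : formula :=
  MOr (MAnd (MNot (MEx1 MTrue)) (if truth (accepting A (start A)) then MTrue else MFalse))
      (MEx1 (MAnd (is_last 0) (MDisj (map (fun j =>
         if truth (accepting A (nth_state j)) then MIn 0 j else MFalse) (seq 0 Nq))))).
Definition run_sentence : formula := MEx2s Nq (MAnd run_labelling accepting_end).

Lemma state_index_step_in q c : In q (states A) -> state_index (step A q c) < Nq.
Proof. intros H; apply state_index_spec, step_in, H. Qed.

Lemma nth_state_in j : j < Nq -> In (nth_state j) (states A).
Proof. apply nth_In. Qed.

Section Bounds.
Variable n : nat.
Hypothesis n_pos : 1 <= n.
Hypothesis thetas_bounded : forall th, In th thetas -> hfvb th <= n.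

Lemma bounded_theta_at b1 b2 i x : x < b1 -> bounded n b1 b2 (theta_at i x).
Proof.
  intros Hx; apply bounded_Alpha; auto; simpl.
  destruct (nth_in_or_default i thetas (HEq 0 0)) as [H|H];
    [apply thetas_bounded in H|rewrite H; simpl]; lia.
Qed.

Lemma bounded_letter_is b1 b2 v x : x < b1 -> bounded n b1 b2 (letter_is v x).
Proof.
  intros H; apply bounded_Conj; intros f Hf; apply in_map_iff in Hf; destruct Hf as [i [<- _]].
  unfold literal; destruct (nth i v false); [|apply bounded_Not]; apply bounded_theta_at; auto.
Qed.

Lemma bounded_run_sentence : bounded n 0 0 run_sentence.
Proof.
  unfold run_sentence; apply bounded_Ex2s; rewrite Nat.add_0_r; apply bounded_And.
  - apply bounded_All, bounded_And; [|apply bounded_And].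
    + apply bounded_Conj; intros f Hf; apply in_map_iff in Hf; destruct Hf as [i [<- Hi]].
      apply bounded_Conj; intros f Hf; apply in_map_iff in Hf; destruct Hf as [j [<- Hj]].
      apply in_seq in Hi, Hj; destruct (i =? j); [apply bounded_True|].
      apply bounded_Not, bounded_And; apply bounded_In; lia.
    + apply bounded_Imp; [apply bounded_Not, bounded_Ex1, bounded_Lt; lia|].
      apply bounded_Conj; intros f Hf; apply in_map_iff in Hf; destruct Hf as [v [<- _]].
      apply bounded_Imp; [apply bounded_letter_is; lia|].
      apply bounded_In; [lia|apply state_index_step_in, start_in].
    + apply bounded_Conj; intros f Hf; apply in_map_iff in Hf; destruct Hf as [j [<- Hj]].
      apply in_seq in Hj.
      apply bounded_Conj; intros f Hf; apply in_map_iff in Hf; destruct Hf as [v [<- _]].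
      apply bounded_Imp; [apply bounded_And; [|apply bounded_letter_is; lia]|].
      * apply bounded_Ex1, bounded_And; [apply bounded_And|apply bounded_In; lia].
        -- apply bounded_Lt; lia.
        -- apply bounded_Not, bounded_Ex1, bounded_And; apply bounded_Lt; lia.
      * apply bounded_In; [lia|apply state_index_step_in, nth_state_in; lia].
  - apply bounded_Or; [apply bounded_And; [apply bounded_Not, bounded_Ex1, bounded_True|]|].
    + destruct (truth _); [apply bounded_True|apply bounded_False].
    + apply bounded_Ex1, bounded_And; [apply bounded_Not, bounded_Ex1, bounded_Lt; lia|].
      apply bounded_Disj; intros f Hf; apply in_map_iff in Hf; destruct Hf as [j [<- Hj]].
      apply in_seq in Hj; destruct (truth _); [apply bounded_In; lia|apply bounded_False].
Qed.
End Bounds.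

Section Semantics.
Variable w : list (list Sigma).
Local Notation sat := (msat ar rel w).
Local Notation L := (conv_len w).
Variable E : nat -> nat -> Prop.
Hypothesis E_beyond : forall i p, k <= i -> ~ E i p.
Hypothesis theta_at_sem : forall i e1 e2 x, i < k -> (sat e1 e2 (theta_at i x) <-> E i (e1 x)).
Let c := column E.

Lemma letter_is_sem v e1 e2 x : length v = k ->
  (sat e1 e2 (letter_is v x) <-> vector_letter v = c (e1 x)).
Proof.
  intros Hv; unfold letter_is; rewrite MConj_sem; split.
  - intros H; apply functional_extensionality; intros i; unfold vector_letter, c, column.
    destruct (Nat.lt_ge_cases i k) as [Hi|Hi].
    + assert (Hin : In i (seq 0 k)) by (apply in_seq; lia).
      specialize (H _ (in_map (fun i => literal i (nth i v false) x) _ _ Hin)); unfold literal in H.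
      destruct (nth i v false); symmetry; [apply truth_true|apply truth_false];
        rewrite <- (@theta_at_sem i e1 e2 x Hi); auto.
    + rewrite nth_overflow by lia; symmetry; apply truth_false, E_beyond; auto.
  - intros H f Hf; apply in_map_iff in Hf; destruct Hf as [i [<- Hi]]; apply in_seq in Hi.
    assert (Hb : nth i v false = truth (E i (e1 x))) by exact (f_equal (fun g => g i) H).
    unfold literal; rewrite Hb; destruct (truthP (E i (e1 x))) as [HE|HE].
    + apply theta_at_sem; [lia|auto].
    + cbn [msat]; rewrite theta_at_sem by lia; auto.
Qed.

Definition column_vector (p : nat) : list bool := map (fun i => truth (E i p)) (seq 0 k).

Lemma column_vector_length p : length (column_vector p) = k.
Proof. unfold column_vector; rewrite length_map, length_seq; auto. Qed.

Lemma vector_letter_column p : vector_letter (column_vector p) = c p.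
Proof.
  apply functional_extensionality; intros i; unfold vector_letter, column_vector, c, column.
  destruct (Nat.lt_ge_cases i k) as [Hi|Hi]; [rewrite nth_map_seq; auto|].
  rewrite nth_overflow by (rewrite length_map, length_seq; lia).
  symmetry; apply truth_false, E_beyond; auto.
Qed.

(* [v] ranges over [bool_vectors k], so [letter_is v] can name the actual letter. *)
Lemma letter_cases (P : letter -> Prop) e1 e2 x :
  (forall v, In v (bool_vectors k) -> sat e1 e2 (letter_is v x) -> P (vector_letter v)) <->
  P (c (e1 x)).
Proof.
  split.
  - intros H; rewrite <- vector_letter_column; apply H.
    + apply bool_vectors_spec, column_vector_length.
    + apply letter_is_sem; [apply column_vector_length|apply vector_letter_column].
  - intros H v Hv Hl; apply letter_is_sem in Hl; [congruence|now apply bool_vectors_spec].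
Qed.

Lemma is_first_sem e1 e2 x : e1 x < L -> (sat e1 e2 (is_first x) <-> e1 x = 0).
Proof.
  intros H; simpl; split.
  - intros H'; destruct (e1 x) eqn:E1; auto; exfalso; apply H'; exists 0; split; simpl; lia.
  - intros E1 [q [_ Hq]]; simpl in Hq; lia.
Qed.

Lemma is_last_sem e1 e2 x : e1 x < L -> (sat e1 e2 (is_last x) <-> S (e1 x) = L).
Proof.
  intros H; simpl; split.
  - intros H'; destruct (Nat.eq_dec (S (e1 x)) L); auto.
    exfalso; apply H'; exists (S (e1 x)); simpl; split; lia.
  - intros E1 [q [Hq1 Hq]]; simpl in Hq; lia.
Qed.

Lemma pred_in_sem j p e1 e2 : p < L ->
  (sat (scons p e1) e2 (pred_in j) <-> exists y, S y = p /\ e2 j y).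
Proof.
  intros Hp; simpl; split.
  - intros [y [Hy [[H1 H2] H3]]]; exists y; split; auto.
    destruct (Nat.eq_dec (S y) p); auto; exfalso; apply H2.
    exists (S y); simpl; split; [lia|split; lia].
  - intros [y [<- Hy]]; exists y; split; [lia|split; auto]; split; [simpl; lia|].
    intros [z [_ [H1 H2]]]; simpl in H1, H2; lia.
Qed.

Let run_state p := run A c (S p).

Lemma run_state_index p : state_index (run_state p) < Nq /\ nth_state (state_index (run_state p)) = run_state p.
Proof. apply state_index_spec, run_in. Qed.

Section Labelling.
Variables (e1 : nat -> nat) (e2 Xs : nat -> nat -> Prop).
Local Notation sat_at p f := (sat (scons p e1) (push_sets Nq Xs e2) f).

Lemma MIn_label p j : j < Nq -> (sat_at p (MIn 0 j) <-> Xs j p).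
Proof. intros Hj; simpl; rewrite push_sets_lt; tauto. Qed.

Lemma states_disjoint_sem p : sat_at p states_disjoint <->
  forall i j, i < Nq -> j < Nq -> i <> j -> ~ (Xs i p /\ Xs j p).
Proof.
  unfold states_disjoint; rewrite MConj_map_sem; setoid_rewrite MConj_map_sem; split.
  - intros H i j Hi Hj Hij; specialize (H i ltac:(apply in_seq; lia) j ltac:(apply in_seq; lia)).
    destruct (Nat.eqb_spec i j); [contradiction|]; simpl in H; rewrite !push_sets_lt in H; auto.
  - intros H i Hi j Hj; apply in_seq in Hi, Hj; destruct (Nat.eqb_spec i j); [apply MTrue_sem|].
    simpl; rewrite !push_sets_lt by lia; apply H; lia.
Qed.

Lemma initial_step_sem p : p < L ->
  (sat_at p initial_step <-> (p = 0 -> Xs (state_index (step A (start A) (c p))) p)).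
Proof.
  intros Hp; unfold initial_step; rewrite MImp_sem, is_first_sem by auto; simpl scons.
  rewrite MConj_map_sem; setoid_rewrite MImp_sem.
  setoid_rewrite MIn_label; [|apply state_index_step_in, start_in].
  rewrite <- (letter_cases (fun l => Xs (state_index (step A (start A) l)) p) (scons p e1) (push_sets Nq Xs e2) 0).
  reflexivity.
Qed.

Lemma transition_step_sem p : p < L ->
  (sat_at p transition_step <->
   forall j y, j < Nq -> S y = p -> Xs j y -> Xs (state_index (step A (nth_state j) (c p))) p).
Proof.
  intros Hp; unfold transition_step; rewrite MConj_map_sem; split.
  - intros H j y Hj Hy HX; specialize (H j ltac:(apply in_seq; lia)).
    rewrite MConj_map_sem in H; setoid_rewrite MImp_sem in H.
    setoid_rewrite MIn_label in H; [|apply state_index_step_in, nth_state_in; auto].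
    rewrite <- (letter_cases (fun l => Xs (state_index (step A (nth_state j) l)) p)
                  (scons p e1) (push_sets Nq Xs e2) 0).
    intros v Hv Hl; apply H; auto; split; auto.
    apply pred_in_sem; auto; exists y; rewrite push_sets_lt; auto.
  - intros H j Hj; apply in_seq in Hj; rewrite MConj_map_sem; setoid_rewrite MImp_sem.
    setoid_rewrite MIn_label; [|apply state_index_step_in, nth_state_in; lia].
    intros v Hv [Hpred Hl]; apply pred_in_sem in Hpred; auto; destruct Hpred as [y [Hy HX]].
    rewrite push_sets_lt in HX by lia.
    apply (proj2 (letter_cases (fun l => Xs (state_index (step A (nth_state j) l)) p)
                    (scons p e1) (push_sets Nq Xs e2) 0)); auto.
    apply (H j y); auto; lia.
Qed.

Lemma run_labelling_sem : sat e1 (push_sets Nq Xs e2) run_labelling <->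
  forall p, p < L ->
    (forall i j, i < Nq -> j < Nq -> i <> j -> ~ (Xs i p /\ Xs j p)) /\
    (p = 0 -> Xs (state_index (step A (start A) (c p))) p) /\
    (forall j y, j < Nq -> S y = p -> Xs j y -> Xs (state_index (step A (nth_state j) (c p))) p).
Proof.
  unfold run_labelling; rewrite MAll_sem; split; intros H p Hp; specialize (H p Hp).
  - destruct H as [H1 [H2 H3]].
    rewrite states_disjoint_sem in H1; rewrite initial_step_sem in H2 by auto;
      rewrite transition_step_sem in H3 by auto; auto.
  - destruct H as [H1 [H2 H3]]; split; [|split].
    + apply states_disjoint_sem; auto.
    + apply initial_step_sem; auto.
    + apply transition_step_sem; auto.
Qed.

Lemma accepting_end_sem : sat e1 (push_sets Nq Xs e2) accepting_end <->
  (L = 0 /\ accepting A (start A)) \/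
  (exists p j, S p = L /\ j < Nq /\ accepting A (nth_state j) /\ Xs j p).
Proof.
  unfold accepting_end; rewrite MOr_sem; split.
  - intros [[H1 H2]|[p [Hp [H1 H2]]]].
    + left; split.
      * destruct (Nat.eq_dec L 0); auto; exfalso; apply H1.
        exists 0; split; [lia|apply MTrue_sem].
      * destruct (truthP (accepting A (start A))); auto; now apply MFalse_sem in H2.
    + right; apply is_last_sem in H1; auto; simpl in H1.
      apply MDisj_sem in H2; destruct H2 as [f [Hf H2]].
      apply in_map_iff in Hf; destruct Hf as [j [<- Hj]]; apply in_seq in Hj.
      destruct (truthP (accepting A (nth_state j))); [|now apply MFalse_sem in H2].
      apply MIn_label in H2; [|lia]; exists p, j; repeat split; auto; lia.
  - intros [[HL Ha]|[p [j [Hp [Hj [Ha HX]]]]]].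
    + left; split; [intros [p [Hp _]]; lia|].
      destruct (truthP (accepting A (start A))); [apply MTrue_sem|contradiction].
    + right; exists p; split; [lia|split]; [apply is_last_sem; simpl; lia|].
      apply MDisj_sem; exists (MIn 0 j); split; [|apply MIn_label; auto].
      apply in_map_iff; exists j; split; [|apply in_seq; lia].
      destruct (truthP (accepting A (nth_state j))); [reflexivity|contradiction].
Qed.

Lemma labelling_is_run :
  (forall p, p < L ->
    (forall i j, i < Nq -> j < Nq -> i <> j -> ~ (Xs i p /\ Xs j p)) /\
    (p = 0 -> Xs (state_index (step A (start A) (c p))) p) /\
    (forall j y, j < Nq -> S y = p -> Xs j y -> Xs (state_index (step A (nth_state j) (c p))) p)) ->
  forall p, p < L -> forall j, j < Nq -> (Xs j p <-> j = state_index (run_state p)).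
Proof.
  intros H.
  assert (Hunique : forall p j, p < L -> j < Nq -> Xs (state_index (run_state p)) p ->
                      (Xs j p <-> j = state_index (run_state p))).
  { intros p j Hp Hj HX; split; [|intros ->; auto]; intros HXj.
    destruct (Nat.eq_dec j (state_index (run_state p))) as [|Hne]; auto; exfalso.
    apply (proj1 (H p Hp) j (state_index (run_state p))); auto; apply run_state_index. }
  induction p as [|p IH]; intros Hp j Hj; apply Hunique; auto.
  - apply (proj1 (proj2 (H 0 Hp))); reflexivity.
  - destruct (run_state_index p) as [Hi Hnth].
    assert (HX : Xs (state_index (run_state p)) p) by (apply IH; [lia|auto|reflexivity]).
    change (run_state (S p)) with (step A (run_state p) (c (S p))); rewrite <- Hnth.
    apply (proj2 (proj2 (H (S p) Hp)) _ p); auto.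
Qed.
End Labelling.

Theorem run_sentence_sem e1 e2 : sat e1 e2 run_sentence <-> accepting A (run A c L).
Proof.
  unfold run_sentence; rewrite MEx2s_sem; split.
  - intros [Xs [_ [Hlab Hend]]]; rewrite run_labelling_sem in Hlab; rewrite accepting_end_sem in Hend.
    destruct Hend as [[HL Ha]|[p [j [Hp [Hj [Ha HX]]]]]]; [now rewrite HL|].
    apply (@labelling_is_run Xs Hlab p ltac:(lia) j Hj) in HX; subst j.
    rewrite (proj2 (run_state_index p)) in Ha; now rewrite <- Hp.
  - intros Ha; exists (fun j p => p < L /\ j = state_index (run_state p)).
    split; [intros j p _ [H _]; exact H|split].
    + apply run_labelling_sem; intros p Hp; split; [|split].
      * intros i j _ _ Hij [[_ H1] [_ H2]]; congruence.
      * intros ->; split; auto.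
      * intros j y Hj Hy [Hyl ->]; split; auto.
        rewrite (proj2 (run_state_index y)), <- Hy; reflexivity.
    + apply accepting_end_sem; destruct (Nat.eq_dec L 0) as [HL|HL]; [left; rewrite HL in Ha; auto|right].
      assert (Hlast : run_state (L - 1) = run A c L) by (unfold run_state; f_equal; lia).
      destruct (run_state_index (L - 1)) as [Hi Hnth].
      exists (L - 1), (state_index (run_state (L - 1))).
      split; [lia|split; [auto|split; [rewrite Hnth, Hlast; auto|split; [lia|reflexivity]]]].
Qed.
End Semantics.
End RunSentence.

(** * From reduction sequences to MSO definitions *)

Section Words.
Variable Sigma : Type.

Lemma conv_letter_map_mu (w : list (list Sigma)) j p :
  conv_letter w j p = nth j (map (@mu Sigma) w) (fun _ => None) p.
Proof.
  revert j; induction w as [|a w IH]; intros j; [unfold conv_letter; now destruct j|].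
  destruct j; [reflexivity|apply IH].
Qed.

Lemma tracks_map_mu (w : list (list Sigma)) p :
  (fun j => nth j (map (@mu Sigma) w) (fun _ => None) p) = (fun j => conv_letter w j p).
Proof. apply functional_extensionality; intros j; symmetry; apply conv_letter_map_mu. Qed.

Lemma length_le_conv_len (w : list (list Sigma)) j u :
  nth_error w j = Some u -> length u <= conv_len w.
Proof.
  revert j; induction w as [|a w IH]; intros j H; [destruct j; discriminate|].
  destruct j; simpl in H; [injection H as <-; simpl; lia|apply IH in H; simpl; lia].
Qed.

Lemma conv_letter_beyond (w : list (list Sigma)) j p : conv_len w <= p -> conv_letter w j p = None.
Proof.
  intros H; unfold conv_letter; destruct (nth_error w j) eqn:E; auto.
  apply length_le_conv_len in E; apply nth_error_None; lia.
Qed.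

Lemma lt_conv_len_iff (w : list (list Sigma)) p :
  p < conv_len w <-> exists j, conv_letter w j p <> None.
Proof.
  split.
  - induction w as [|a w IH]; simpl; intros H; [lia|].
    destruct (Nat.lt_ge_cases p (length a)).
    + exists 0; unfold conv_letter; simpl; intros E; apply nth_error_None in E; lia.
    + destruct IH as [j Hj]; [lia|]; exists (S j); exact Hj.
  - intros [j Hj]; destruct (Nat.lt_ge_cases p (conv_len w)); auto.
    exfalso; apply Hj, conv_letter_beyond; auto.
Qed.

Lemma map_mu_injective (w w' : list (list Sigma)) : map (@mu Sigma) w = map (@mu Sigma) w' -> w = w'.
Proof.
  revert w'; induction w; intros [|b w'] H; simpl in H; try discriminate; auto.
  injection H as H1 H2; f_equal; auto.
  apply nth_error_ext; intros i; exact (f_equal (fun f => f i) H1).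
Qed.

Lemma mu_rel_map_mu (R : list (list Sigma) -> Prop) w : mu_rel R (map (@mu Sigma) w) <-> R w.
Proof.
  split; [|intros H; exists w; auto].
  intros [w' [H E]]; apply map_mu_injective in E; subst; auto.
Qed.

Lemma map_mu_in_W (w : list (list Sigma)) : Forall (@in_W Sigma) (map (@mu Sigma) w).
Proof.
  apply Forall_forall; intros f Hf; apply in_map_iff in Hf; destruct Hf as [u [<- _]].
  exists (length u); intros i Hi; apply nth_error_None; auto.
Qed.
End Words.

Lemma reduction_to_mso (Sym : Type) (ar : Sym -> nat) (Sigma : Type)
  (rel : Sym -> list Sigma -> Prop) (n : nat) (R : list (list Sigma) -> Prop) :
  1 <= n -> (forall w, R w -> length w = n) ->
  admits_reduction_sequence ar rel n (mu_rel R) -> MSO_definable ar rel n R.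
Proof.
  intros Hn HR [G [thetas [HG [Hth Heq]]]]; rewrite Forall_forall in Hth.
  set (A := automaton_of G).
  exists (run_sentence thetas A).
  destruct (@bounded_run_sentence Sym thetas A n Hn ltac:(intros th H; apply Hth; auto)) as [H1 [H2 H3]].
  split; [auto|split; [lia|split; [lia|]]].
  intros w Hw; set (E := theta_set ar rel thetas (map (@mu Sigma) w)).
  rewrite <- mu_rel_map_mu, Heq by (rewrite ?length_map; auto using map_mu_in_W).
  fold E; rewrite (@automaton_of_recognizes G E (conv_len w)).
  - symmetry; apply (run_sentence_sem A E).
    + intros i p Hi; unfold E, theta_set; rewrite (proj2 (nth_error_None thetas i) Hi); auto.
    + intros i e1 e2 x Hi; unfold theta_at, E, theta_set; simpl.
      rewrite (nth_error_nth' thetas (HEq 0 0) Hi), tracks_map_mu; tauto.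
  - intros i p; unfold E, theta_set; destruct (nth_error thetas i) as [th|] eqn:Eth; [|tauto].
    intros Hs; destruct (Nat.lt_ge_cases p (conv_len w)) as [|Hp]; auto; exfalso.
    apply (proj2 (Hth th ltac:(eapply nth_error_In; eauto))).
    rewrite tracks_map_mu in Hs.
    replace (fun _ : nat => @None Sigma) with (fun j => conv_letter w j p); auto.
    apply functional_extensionality; intros j; apply conv_letter_beyond; auto.
Qed.

(** * From MSO definitions to reduction sequences *)

Definition SOr (f g : sform) : sform := SNot (SAnd (SNot f) (SNot g)).
Definition STrue : sform := SEq 0 0.
Definition SConj (fs : list sform) : sform := fold_right SAnd STrue fs.
Definition singleton (a : nat) : sform := SEx (SOr (SLL (S a) 0) (SLL 0 (S a))).
Definition down_closed (a : nat) : sform :=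
  SNot (SEx (SEx (SAnd (SLL 1 0) (SAnd (SSub 0 (S (S a))) (SNot (SSub 1 (S (S a)))))))).

(* A set is a singleton iff it is comparable under [<<] with some singleton. *)
Lemma singleton_sem E a : ssat E (singleton a) <-> exists m, forall j, E a j <-> j = m.
Proof.
  simpl; split.
  - intros [Y [_ H]]; apply NNPP; intros Hn; apply H.
    split; intros [m [k [_ [H1 H2]]]]; apply Hn; [exists m; exact H1|exists k; exact H2].
  - intros [m Hm]; exists (fun j => j = S m); split; [exists (S (S m)); intros k ->; lia|].
    intros [H1 _]; apply H1; exists m, (S m); split; [lia|split; auto]; intros; tauto.
Qed.

Lemma down_closed_sem E a : ssat E (down_closed a) <-> forall m k, m < k -> E a k -> E a m.
Proof.
  simpl; split.
  - intros H m k Hmk Hk; apply NNPP; intros Hm; apply H.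
    exists (fun j => j = m); split; [exists (S m); intros; lia|].
    exists (fun j => j = k); split; [exists (S k); intros; lia|].
    split; [exists m, k; split; auto; split; intros j; simpl; tauto|].
    split; [intros j ->; auto|intros H'; apply Hm, H'; auto].
  - intros H [Y1 [_ [Y0 [_ [[m [k [Hmk [H1 H2]]]] [H3 H4]]]]]].
    apply H4; intros j Hj; simpl in *; apply H1 in Hj; subst j.
    apply (H m k Hmk), H3, H2; auto.
Qed.

Lemma SConj_sem E fs : ssat E (SConj fs) <-> forall f, In f fs -> ssat E f.
Proof.
  induction fs as [|f fs IH]; simpl; [split; [tauto|intros _ k; tauto]|].
  rewrite IH; split; [intros [H1 H2] g [<-|Hg]; auto|intros H; split; auto].
Qed.

Lemma sfvb_SConj fs B : 1 <= B -> (forall f, In f fs -> sfvb f <= B) -> sfvb (SConj fs) <= B.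
Proof.
  induction fs as [|f fs IH]; simpl; intros H1 H2; [lia|].
  assert (sfvb f <= B) by auto; assert (sfvb (SConj fs) <= B) by auto; lia.
Qed.

Fixpoint alphas {Sym} (f : mso Sym) : list (hform Sym) :=
  match f with
  | MAlpha F _ => [F]
  | MNot g | MEx1 g | MEx2 g => alphas g
  | MAnd g h => alphas g ++ alphas h
  | _ => []
  end.

Lemma alphas_wf {Sym} n (f : mso Sym) : mso_wf n f -> forall G, In G (alphas f) -> 0 < hfvb G <= n.
Proof.
  induction f; simpl; intros H G HG; try contradiction; auto.
  - destruct HG as [<-|[]]; auto.
  - apply in_app_iff in HG; destruct H; destruct HG; auto.
Qed.

(* Under [t] quantifiers, set variable [t] is the set T_0 of positions of the
   convolution and [t + S n + c + i] the set of the [i]-th alpha predicate of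
   [f], [c] counting those occurring earlier in the whole formula; [r1], [r2]
   send position and set variables of [f] to set variables, a position being
   coded by a singleton. *)
Fixpoint translate {Sym} (n : nat) (r1 r2 : nat -> nat) (t c : nat) (f : mso Sym) : sform :=
  match f with
  | MLt x y => SLL (r1 x) (r1 y)
  | MEq x y => SEq (r1 x) (r1 y)
  | MIn x X => SSub (r1 x) (r2 X)
  | MAlpha _ x => SSub (r1 x) (t + S n + c)
  | MNot g => SNot (translate n r1 r2 t c g)
  | MAnd g h => SAnd (translate n r1 r2 t c g) (translate n r1 r2 t (c + length (alphas g)) h)
  | MEx1 g => SEx (SAnd (SAnd (singleton 0) (SSub 0 (S t)))
                 (translate n (scons 0 (fun x => S (r1 x))) (fun X => S (r2 X)) (S t) c g))
  | MEx2 g => SEx (SAnd (SSub 0 (S t))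
                 (translate n (fun x => S (r1 x)) (scons 0 (fun X => S (r2 X))) (S t) c g))
  end.

Lemma translate_bound {Sym} n (f : mso Sym) : forall r1 r2 t c B,
  (forall x, x < mfv1 f -> r1 x < B) -> (forall X, X < mfv2 f -> r2 X < B) ->
  t < B -> t + S n + c + length (alphas f) <= B -> sfvb (translate n r1 r2 t c f) <= B.
Proof.
  induction f; intros r1 r2 t c B H1 H2 Ht Hc; cbn [translate alphas mfv1 mfv2 sfvb length] in *.
  - assert (r1 x < B) by (apply H1; lia); assert (r1 y < B) by (apply H1; lia); lia.
  - assert (r1 x < B) by (apply H1; lia); assert (r1 y < B) by (apply H1; lia); lia.
  - assert (r1 x < B) by (apply H1; lia); assert (r2 X < B) by (apply H2; lia); lia.
  - assert (r1 x < B) by (apply H1; lia); lia.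
  - apply IHf; auto.
  - rewrite length_app in Hc; apply Nat.max_lub; [apply IHf1|apply IHf2]; try lia;
      intros; [apply H1|apply H2|apply H1|apply H2]; lia.
  - enough (sfvb (translate n (scons 0 (fun x => S (r1 x))) (fun X => S (r2 X)) (S t) c f) <= S B) by (cbn [sfvb singleton SOr]; lia).
    apply IHf; try lia; [intros [|x] Hx; simpl; [lia|]|intros X HX];
      [assert (r1 x < B) by (apply H1; lia)|assert (r2 X < B) by (apply H2; lia)]; lia.
  - enough (sfvb (translate n (fun x => S (r1 x)) (scons 0 (fun X => S (r2 X))) (S t) c f) <= S B) by (cbn [sfvb]; lia).
    apply IHf; try lia; [intros x Hx|intros [|X] HX; simpl; [lia|]];
      [assert (r1 x < B) by (apply H1; lia)|assert (r2 X < B) by (apply H2; lia)]; lia.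
Qed.

Section TranslationSemantics.
Variables (Sym : Type) (ar : Sym -> nat) (Sigma : Type) (rel : Sym -> list Sigma -> Prop).
Variables (n : nat) (w : list (list Sigma)).
Local Notation sat := (msat ar rel w).
Local Notation L := (conv_len w).

Definition translation_correct (f : mso Sym) : Prop :=
  forall r1 r2 t c E e1 e2,
  (forall p, E t p <-> p < L) ->
  (forall i p, i < length (alphas f) -> p < L ->
     (E (t + S n + c + i) p <->
      hsat ar rel (fun j => conv_letter w j p) (nth i (alphas f) (HEq 0 0)))) ->
  (forall x, x < mfv1 f -> (forall k, E (r1 x) k <-> k = e1 x) /\ e1 x < L) ->
  (forall X, X < mfv2 f -> forall k, E (r2 X) k <-> e2 X k) ->
  (ssat E (translate n r1 r2 t c f) <-> sat e1 e2 f).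

Lemma translation_correct_And f g :
  translation_correct f -> translation_correct g -> translation_correct (MAnd f g).
Proof.
  intros IHf IHg r1 r2 t c E e1 e2 HD HA H1 H2; simpl in *; rewrite length_app in HA.
  rewrite (IHf r1 r2 t c E e1 e2), (IHg r1 r2 t (c + length (alphas f)) E e1 e2); [tauto|..];
    auto; try (intros x Hx; apply H1; lia); try (intros X HX; apply H2; lia).
  - intros i p Hi Hp.
    replace (t + S n + (c + length (alphas f)) + i) with (t + S n + c + (length (alphas f) + i)) by lia.
    rewrite HA, app_nth2 by lia; now replace (length (alphas f) + i - length (alphas f)) with i by lia.
  - intros i p Hi Hp; rewrite HA, app_nth1 by lia; tauto.
Qed.

Lemma translation_correct_Ex1 f : translation_correct f -> translation_correct (MEx1 f).
Proof.
  intros IH r1 r2 t c E e1 e2 HD HA H1 H2; cbn [translate alphas mfv1 mfv2 ssat msat] in *.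
  assert (H1' : forall Y m, (forall j, Y j <-> j = m) -> m < L -> forall x, x < mfv1 f ->
            (forall k, scons Y E (scons 0 (fun x => S (r1 x)) x) k <-> k = scons m e1 x) /\
            scons m e1 x < L)
    by (intros Y m Hm HmL [|x] Hx; simpl; [auto|apply H1; lia]).
  split.
  - intros [Y [_ [[HS Hsub] Hg]]]; apply singleton_sem in HS; destruct HS as [m Hm]; simpl in Hm.
    assert (HmL : m < L) by (apply HD, Hsub, Hm; auto).
    exists m; split; auto.
    exact (proj1 (IH (scons 0 (fun x => S (r1 x))) (fun X => S (r2 X)) (S t) c (scons Y E) (scons m e1) e2
                     HD HA (H1' Y m Hm HmL) H2) Hg).
  - intros [p [Hp Hg]]; exists (fun j => j = p); split; [exists (S p); intros; lia|].
    split; [split; [apply singleton_sem; exists p; simpl; tauto|simpl; intros k ->; apply HD; auto]|].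
    apply (IH (scons 0 (fun x => S (r1 x))) (fun X => S (r2 X)) (S t) c (scons (fun j => j = p) E)
             (scons p e1) e2 HD HA (H1' _ p (fun j => iff_refl _) Hp) H2); auto.
Qed.

Lemma translation_correct_Ex2 f : translation_correct f -> translation_correct (MEx2 f).
Proof.
  intros IH r1 r2 t c E e1 e2 HD HA H1 H2; simpl in *.
  assert (H2' : forall Y X, X < mfv2 f ->
            forall k, scons Y E (scons 0 (fun X => S (r2 X)) X) k <-> scons Y e2 X k)
    by (intros Y [|X] HX k; simpl; [tauto|apply H2; lia]).
  split.
  - intros [Y [_ [Hsub Hg]]]; exists Y; split; [intros p Hp; apply HD, Hsub; auto|].
    exact (proj1 (IH (fun x => S (r1 x)) (scons 0 (fun X => S (r2 X))) (S t) c (scons Y E) e1 (scons Y e2)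
                     HD HA H1 (H2' Y)) Hg).
  - intros [X [HX Hg]]; exists X; split; [exists L; auto|split; [intros k Hk; apply HD, HX; auto|]].
    apply (IH (fun x => S (r1 x)) (scons 0 (fun X => S (r2 X))) (S t) c (scons X E) e1 (scons X e2)
             HD HA H1 (H2' X)); auto.
Qed.

Lemma translate_sem f : translation_correct f.
Proof.
  induction f; auto using translation_correct_And, translation_correct_Ex1, translation_correct_Ex2;
    intros r1 r2 t c E e1 e2 HD HA H1 H2; simpl in *.
  - destruct (H1 x ltac:(lia)) as [Hx _], (H1 y ltac:(lia)) as [Hy _]; split.
    + intros [m [k [Hmk [A1 A2]]]].
      assert (m = e1 x) by (apply Hx, A1; auto); assert (k = e1 y) by (apply Hy, A2; auto); lia.
    + intros Hlt; exists (e1 x), (e1 y); split; [auto|split]; intros j; [rewrite Hx|rewrite Hy]; tauto.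
  - destruct (H1 x ltac:(lia)) as [Hx _], (H1 y ltac:(lia)) as [Hy _]; split.
    + intros H; apply Hy, H, Hx; auto.
    + intros Heq k; rewrite Hx, Hy, Heq; tauto.
  - destruct (H1 x ltac:(lia)) as [Hx _]; split.
    + intros H; apply H2; [lia|]; apply H, Hx; auto.
    + intros H k Hk; apply Hx in Hk; subst k; apply H2; auto; lia.
  - destruct (H1 x ltac:(lia)) as [Hx Hl]; specialize (HA 0 (e1 x) ltac:(lia) Hl).
    rewrite Nat.add_0_r in HA; simpl in HA; split.
    + intros H; apply HA, H, Hx; auto.
    + intros H k Hk; apply Hx in Hk; subst k; apply HA; auto.
  - rewrite (IHf r1 r2 t c E e1 e2 HD HA H1 H2); tauto.
Qed.
End TranslationSemantics.

Fixpoint all_hash {Sym} (m : nat) : hform Sym :=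
  match m with 0 => HEq 0 0 | S m' => HAnd (HHash m') (all_hash m') end.

Lemma all_hash_sem {Sym} (ar : Sym -> nat) {Sigma} (rel : Sym -> list Sigma -> Prop) e m :
  hsat ar rel e (all_hash m) <-> forall i, i < m -> e i = None.
Proof.
  induction m as [|m IH]; simpl; [split; intros; auto; lia|].
  rewrite IH; split; [intros [H1 H2] i Hi; destruct (Nat.eq_dec i m); subst; auto; apply H2; lia|].
  intros H; split; auto.
Qed.

Lemma hfvb_all_hash {Sym} m : hfvb (@all_hash Sym m) = Nat.max m 1.
Proof. induction m as [|m IH]; [reflexivity|]; cbn [all_hash hfvb]; rewrite IH; lia. Qed.

Lemma down_closed_is_mu {Sigma} (f : nat -> option Sigma) : in_W f ->
  (forall m k, m < k -> f k <> None -> f m <> None) -> exists u, f = mu u.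
Proof.
  intros [M HM]; revert f HM; induction M as [|M IH]; intros f HM Hd.
  - exists []; apply functional_extensionality; intros i; rewrite HM by lia; now destruct i.
  - destruct (f 0) as [a|] eqn:F0.
    + destruct (IH (fun i => f (S i))) as [u Hu]; [intros i Hi; apply HM; lia|intros m k Hmk; apply Hd; lia|].
      exists (a :: u); apply functional_extensionality; intros [|i]; simpl; auto.
      exact (f_equal (fun g => g i) Hu).
    + exists []; apply functional_extensionality; intros [|i]; simpl; auto.
      destruct (f (S i)) eqn:E; auto; exfalso; apply (Hd 0 (S i)); [lia|congruence|auto].
Qed.

Lemma Forall_mu_map {Sigma} (fs : list (nat -> option Sigma)) :
  Forall (fun f => exists u, f = mu u) fs -> exists w, fs = map (@mu Sigma) w.
Proof.
  induction 1 as [|f fs [u ->] _ [w ->]]; [exists []; auto|exists (u :: w); auto].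
Qed.

(* The set T_0 holds the positions of the convolution, T_(1+i) those of the
   letters of the [i]-th word, and T_(n+1+c) those where the [c]-th alpha
   predicate of [psi] holds; conjoining with [position_theta] makes every
   formula false on [#, ..., #]. *)
Section MsoToReduction.
Variables (Sym : Type) (ar : Sym -> nat) (Sigma : Type) (rel : Sym -> list Sigma -> Prop).
Variables (n : nat) (psi : mso Sym).

Definition position_theta : hform Sym := HNot (all_hash n).
Definition track_thetas : list (hform Sym) := map (fun i => HNot (HHash i)) (seq 0 n).
Definition alpha_thetas : list (hform Sym) := map (fun F => HAnd F position_theta) (alphas psi).
Definition reduction_thetas : list (hform Sym) := position_theta :: (track_thetas ++ alpha_thetas).
Definition tracks_down_closed : sform := SConj (map (fun i => down_closed (S i)) (seq 0 n)).
Definition reduction_formula : sform :=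
  SAnd tracks_down_closed (translate n (fun _ => 0) (fun _ => 0) 0 0 psi).

Section ThetaSets.
Variable fs : list (nat -> option Sigma).
Let track p := fun j => nth j fs (fun _ => None) p.
Let T := theta_set ar rel reduction_thetas fs.

Lemma theta_set_position p : T 0 p <-> ~ (forall i, i < n -> track p i = None).
Proof. unfold T, theta_set; simpl; rewrite all_hash_sem; reflexivity. Qed.

Lemma theta_set_track i p : i < n -> (T (S i) p <-> track p i <> None).
Proof.
  intros Hi; unfold T, theta_set, reduction_thetas; simpl.
  rewrite nth_error_app1 by (unfold track_thetas; rewrite length_map, length_seq; auto).
  unfold track_thetas; rewrite nth_error_map, nth_error_seq.
  destruct (Nat.ltb_spec i n); [reflexivity|lia].
Qed.

Lemma theta_set_alpha c p : c < length (alphas psi) ->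
  (T (S n + c) p <-> hsat ar rel (track p) (nth c (alphas psi) (HEq 0 0)) /\
                      ~ (forall i, i < n -> track p i = None)).
Proof.
  intros Hc; unfold T, theta_set, reduction_thetas; simpl.
  rewrite nth_error_app2 by (unfold track_thetas; rewrite length_map, length_seq; lia).
  unfold track_thetas, alpha_thetas; rewrite length_map, length_seq.
  replace (n + c - n) with c by lia.
  rewrite nth_error_map, (nth_error_nth' _ (HEq 0 0) Hc); simpl; rewrite all_hash_sem; reflexivity.
Qed.
End ThetaSets.

Hypothesis n_pos : 1 <= n.
Hypothesis psi_wf : mso_wf n psi.
Hypothesis psi_closed1 : mfv1 psi = 0.
Hypothesis psi_closed2 : mfv2 psi = 0.

Lemma reduction_formula_bound : sfvb reduction_formula <= length reduction_thetas.
Proof.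
  unfold reduction_thetas, reduction_formula, track_thetas, alpha_thetas; simpl.
  rewrite length_app, !length_map, length_seq; apply Nat.max_lub.
  - apply sfvb_SConj; [lia|]; intros f Hf; apply in_map_iff in Hf; destruct Hf as [i [<- Hi]].
    apply in_seq in Hi; simpl; lia.
  - apply translate_bound; lia.
Qed.

Lemma reduction_thetas_ok :
  Forall (fun th => hfvb th <= n /\ ~ hsat ar rel (fun _ => None) th) reduction_thetas.
Proof.
  assert (Hpos : hfvb position_theta <= n /\ ~ hsat ar rel (fun _ => None) position_theta).
  { unfold position_theta; simpl; rewrite hfvb_all_hash, all_hash_sem; split; [lia|auto]. }
  apply Forall_forall; intros th [<-|Hth]; auto; apply in_app_iff in Hth.
  destruct Hth as [Hth|Hth]; apply in_map_iff in Hth.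
  - destruct Hth as [i [<- Hi]]; apply in_seq in Hi; simpl; split; [lia|tauto].
  - destruct Hth as [F [<- HF]]; apply (@alphas_wf Sym n psi psi_wf) in HF; cbn [hfvb hsat]; split; [lia|tauto].
Qed.

Section OnWords.
Variable w : list (list Sigma).
Hypothesis w_length : length w = n.
Let T := theta_set ar rel reduction_thetas (map (@mu Sigma) w).

Lemma theta_set_position_map_mu p : T 0 p <-> p < conv_len w.
Proof.
  unfold T; rewrite theta_set_position; setoid_rewrite <- conv_letter_map_mu; rewrite lt_conv_len_iff; split.
  - intros H; apply NNPP; intros H'; apply H; intros i _; apply NNPP; intros H''; apply H'; eauto.
  - intros [j Hj] H; apply Hj; destruct (Nat.lt_ge_cases j n); [apply H; auto|].
    unfold conv_letter; rewrite (proj2 (nth_error_None w j)) by lia; reflexivity.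
Qed.

Lemma tracks_down_closed_map_mu : ssat T tracks_down_closed.
Proof.
  apply SConj_sem; intros f Hf; apply in_map_iff in Hf; destruct Hf as [i [<- Hi]]; apply in_seq in Hi.
  apply down_closed_sem; intros m k Hmk; unfold T; rewrite !theta_set_track, <- !conv_letter_map_mu by lia.
  unfold conv_letter; destruct (nth_error w i); auto.
  intros H1 H2; apply H1, nth_error_None; apply nth_error_None in H2; lia.
Qed.

Lemma translate_map_mu :
  ssat T (translate n (fun _ => 0) (fun _ => 0) 0 0 psi) <-> msat ar rel w (fun _ => 0) (fun _ _ => False) psi.
Proof.
  apply translate_sem; [apply theta_set_position_map_mu| |intros x Hx; lia|intros X HX; lia].
  intros i p Hi Hp; replace (0 + S n + 0 + i) with (S n + i) by lia.
  assert (HD := proj2 (theta_set_position_map_mu p) Hp).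
  unfold T in *; rewrite theta_set_alpha, tracks_map_mu by auto; rewrite theta_set_position in HD; tauto.
Qed.
End OnWords.
End MsoToReduction.

Lemma mso_to_reduction (Sym : Type) (ar : Sym -> nat) (Sigma : Type)
  (rel : Sym -> list Sigma -> Prop) (n : nat) (R : list (list Sigma) -> Prop) :
  1 <= n -> (forall w, R w -> length w = n) ->
  MSO_definable ar rel n R -> admits_reduction_sequence ar rel n (mu_rel R).
Proof.
  intros Hn HR [psi [Hwf [Hm1 [Hm2 Hpsi]]]].
  exists (reduction_formula n psi), (reduction_thetas n psi).
  split; [apply reduction_formula_bound; auto|split; [apply reduction_thetas_ok; auto|]].
  intros fs Hlen HW; split.
  - intros [w [HRw ->]]; split; [apply tracks_down_closed_map_mu; auto|].
    apply translate_map_mu; auto; apply Hpsi; auto.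
  - intros [HC Htr].
    assert (Hex : exists w, fs = map (@mu Sigma) w).
    { apply Forall_mu_map; rewrite Forall_forall in HW |- *; intros f Hf; apply down_closed_is_mu; auto.
      destruct (In_nth fs f (fun _ => None) Hf) as [i [Hi Hfi]].
      apply SConj_sem with (f := down_closed (S i)) in HC; [|apply (in_map (fun i => down_closed (S i))), in_seq; lia].
      rewrite down_closed_sem in HC; intros m k Hmk Hk; rewrite <- Hfi.
      apply (@theta_set_track Sym ar Sigma rel n psi fs i m ltac:(lia)), (HC m k Hmk).
      apply theta_set_track; [lia|]; rewrite Hfi; auto. }
    destruct Hex as [w ->]; rewrite length_map in Hlen; apply mu_rel_map_mu, Hpsi; auto.
    apply (translate_map_mu ar rel psi Hn Hm1 Hm2 w Hlen); auto.
Qed.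

Theorem proposition4p9 (Sym : Type) (ar : Sym -> nat) (Sigma : Type)
  (rel : Sym -> list Sigma -> Prop) (n : nat) (R : list (list Sigma) -> Prop) :
  1 <= n ->
  (forall w, R w -> length w = n) ->
  (MSO_definable ar rel n R <->
   admits_reduction_sequence ar rel n (mu_rel R)).
Proof.
  intros Hn HR; split; [apply mso_to_reduction|apply reduction_to_mso]; auto.
Qed.
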